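(* Every shift space $X\subseteq\mathscr{A}^\infty$ with the $\bar d$-shadowing property is $\bar d$-approachable.
   Context: $\mathscr{A}$ finite; shift spaces are nonempty closed shift-invariant subsets of $\mathscr{A}^{\mathbb N_0}$; $\mathcal L(X)$, $\mathcal L_n(X)$ denote the words (of length $n$) appearing in $X$. $\bar d(x,y)=\limsup_{n\to\infty}\frac1n|\{0\le j<n:x_j\ne y_j\}|$; $\bar d^H(A,B)=\max\{\sup_{a\in A}\inf_{b\in B}\bar d(a,b),\sup_{b\in B}\inf_{a\in A}\bar d(a,b)\}$. $X$ has the $\bar d$-shadowing property if for every $\varepsilon>0$ there is $N$ such that for every sequence $(w^{(j)})_{j\ge1}$ in $\mathcal L(X)$ with $|w^{(j)}|\ge N$ there is $x'\in X$ with $\bar d(w^{(1)}w^{(2)}\cdots,x')<\varepsilon$. The $n$-th Markov approximation $X^M_n$ is the set of $x\in\mathscr{A}^{\mathbb N_0}$ all of whose subwords of length $n+1$ lie in $\mathcal L_{n+1}(X)$. $X$ is $\bar d$-approachable if $\bar d^H(X^M_n,X)\to0$ as $n\to\infty$. *)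

From HB Require Import structures.
From mathcomp Require Import all_boot all_order all_algebra.
From mathcomp Require Import all_classical all_reals.
From mathcomp Require Import topology normedtype sequences Rstruct Rstruct_topology.
From Stdlib Require Rdefinitions.
Notation R := Rdefinitions.R.
Set Implicit Arguments. Unset Strict Implicit. Unset Printing Implicit Defensive.
Import Order.TTheory GRing.Theory Num.Theory.
Local Open Scope classical_set_scope.
Local Open Scope ring_scope.

Section ShiftSpaces.
Variable A : finType.

Definition seqA := nat -> A.

Definition subword (x : seqA) (i n : nat) : seq A := [seq x (i + k)%N | k <- iota 0 n].

Definition shift (x : seqA) : seqA := fun k => x k.+1.

(* closed in the product topology of the discrete A: any x each of whose
   cylinder neighbourhoods [x_0 .. x_{n-1}] meets X lies in X *)
Definition closedX (X : set seqA) : Prop :=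
  forall x : seqA, (forall n : nat, exists2 y, X y & forall i : nat, (i < n)%N -> y i = x i) -> X x.

Definition shift_space (X : set seqA) : Prop :=
  [/\ X !=set0, closedX X & forall x, X x -> X (shift x)].

Definition lang (X : set seqA) (w : seq A) : Prop :=
  exists2 x, X x & exists i, w = subword x i (size w).

Definition dbar (x y : seqA) : R :=
  limn_sup (fun n : nat => (#|[set j : 'I_n | x j != y j]|%:R / n%:R : R)).

Definition dbarH (P Q : set seqA) : R :=
  Num.max (sup [set inf [set dbar a b | b in Q] | a in P])
          (sup [set inf [set dbar a b | a in P] | b in Q]).

Definition cumlen (w : nat -> seq A) (j : nat) : nat := (\sum_(i < j) size (w i))%N.

Definition is_concat (w : nat -> seq A) (x : seqA) : Prop :=
  forall j, subword x (cumlen w j) (size (w j)) = w j.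

(* d-bar shadowing property (N >= 1 w.l.o.g., so the concatenation is infinite) *)
Definition dbar_shadowing (X : set seqA) : Prop :=
  forall eps : R, 0 < eps -> exists N : nat, (0 < N)%N /\
    forall w : nat -> seq A, (forall j, lang X (w j) /\ (N <= size (w j))%N) ->
    forall x, is_concat w x -> exists2 x', X x' & dbar x x' < eps.

Definition markov_approx (X : set seqA) (n : nat) : set seqA :=
  [set x | forall i, lang X (subword x i n.+1)].

Definition dbar_approachable (X : set seqA) : Prop :=
  (fun n => dbarH (markov_approx X n) X) @ \oo --> (0 : R).

End ShiftSpaces.

From mathcomp Require Import all_boot all_order all_algebra.
From mathcomp Require Import all_classical all_reals.
From mathcomp Require Import topology normedtype sequences Rstruct Rstruct_topology.
Set Implicit Arguments. Unset Strict Implicit. Unset Printing Implicit Defensive.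
Import Order.TTheory GRing.Theory Num.Theory.
Local Open Scope classical_set_scope.
Local Open Scope ring_scope.

(* Fix eps > 0 and let N be given by the d-bar shadowing
   property.  For n >= N, a point a of the Markov approximation X^M_n is the
   concatenation of its consecutive blocks of length n+1, each of which lies
   in L(X) by definition of X^M_n; shadowing thus yields a point of X within
   d-bar distance eps of a.  Conversely X is contained in X^M_n, so every
   point of X is at distance 0 from X^M_n.  Hence the d-bar Hausdorff
   distance between X^M_n and X is at most eps. *)

Section DbarFacts.
Variable A : finType.

Lemma disagreement_freq_bounds (x y : seqA A) (n : nat) :
  0 <= (#|[set j : 'I_n | x j != y j]|%:R / n%:R : R) <= 1.
Proof.
apply/andP; split; first by rewrite divr_ge0.
case: n => [|n]; first by rewrite invr0 mulr0.
rewrite ler_pdivrMr ?ltr0Sn // mul1r ler_nat.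
by apply: leq_trans (max_card _) _; rewrite card_ord.
Qed.

Lemma dbar_ge0 (x y : seqA A) : 0 <= dbar x y.
Proof.
rewrite /dbar; set u := (fun n : nat => _).
have u_bounded : bounded_fun (u : R^o^nat).
  apply/(@ex_bound _ _ _ _ _ (@globally_properfilter _ setT 0%N I)).
  exists 1 => n _ /=.
  by have /andP[u0 u1] := disagreement_freq_bounds x y n; rewrite ger0_norm.
rewrite limn_supE //; apply: lb_le_inf; first by exists (sups u 0%N); exists 0%N.
move=> _ [m _ <-] /=.
apply: le_trans (proj1 (andP (disagreement_freq_bounds x y m))) _.
apply: ub_le_sup; last by exists m => /=.
by move: u_bounded => /bounded_fun_has_ubound/has_ubound_sdrop; apply.
Qed.

Lemma dbar_xx (x : seqA A) : dbar x x = 0.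
Proof.
rewrite /dbar.
have -> : (fun n : nat => (#|[set j : 'I_n | x j != x j]|%:R / n%:R : R)) =
          fun _ => 0.
  apply: funext => n; rewrite eq_card0 ?mul0r // => j.
  by apply/negP => /set_mem /=; rewrite eqxx.
exact: (cvg_limn_inf_sup (cvg_cst (0 : R^o))).2.
Qed.

End DbarFacts.

Lemma sup_between (S : set R) (e : R) :
  S !=set0 -> (forall s, S s -> 0 <= s <= e) -> 0 <= sup S <= e.
Proof.
move=> [s Ss] S_bnd; have /andP[s0 _] := S_bnd s Ss.
apply/andP; split; last by apply: ge_sup; [exists s | move=> t /S_bnd/andP[]].
apply: le_trans s0 (ub_le_sup _ Ss).
by exists e => t /S_bnd/andP[].
Qed.

Lemma inf_image_between (T : Type) (f : T -> R) (Q : set T) (b : T) :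
  (forall c, 0 <= f c) -> Q b -> 0 <= inf (f @` Q) <= f b.
Proof.
move=> f_ge0 Qb; apply/andP; split.
  by apply: lb_le_inf; [exists (f b), b | move=> _ [c _ <-]].
by apply: ge_inf; [exists 0 => _ [c _ <-] | exists b].
Qed.

Section HausdorffBound.
Variable A : finType.

Lemma dbarH_between (P Q : set (seqA A)) (e : R) :
  P !=set0 ->
  (forall a, P a -> exists2 b, Q b & dbar a b <= e) ->
  (forall b, Q b -> exists2 a, P a & dbar a b <= e) ->
  0 <= dbarH P Q <= e.
Proof.
move=> [a0 Pa0] closePQ closeQP.
have [b0 Qb0 _] := closePQ a0 Pa0.
have /andP[PQ0 PQe] : 0 <= sup [set inf [set dbar a b | b in Q] | a in P] <= e.
  apply: sup_between; first by exists (inf [set dbar a0 b | b in Q]), a0.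
  move=> _ [a Pa <-]; have [b Qb ab_e] := closePQ a Pa.
  have /andP[-> inf_ab] := inf_image_between (dbar_ge0 a) Qb.
  exact: le_trans inf_ab ab_e.
have /andP[_ QPe] : 0 <= sup [set inf [set dbar a b | a in P] | b in Q] <= e.
  apply: sup_between; first by exists (inf [set dbar a b0 | a in P]), b0.
  move=> _ [b Qb <-]; have [a Pa ab_e] := closeQP b Qb.
  have /andP[-> inf_ab] := inf_image_between (fun c => dbar_ge0 c b) Pa.
  exact: le_trans inf_ab ab_e.
by rewrite /dbarH le_max ge_max PQ0 PQe QPe.
Qed.

End HausdorffBound.

Section MarkovApproximation.
Variables (A : finType) (X : set (seqA A)).

Lemma size_subword (x : seqA A) (i n : nat) : size (subword x i n) = n.
Proof. by rewrite /subword size_map size_iota. Qed.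

Lemma sub_markov_approx (n : nat) : X `<=` markov_approx X n.
Proof. by move=> x Xx i; exists x => //; exists i; rewrite size_subword. Qed.

(* A point a of X^M_n is the concatenation of its blocks of length n+1, all
   of which lie in L(X); so if the shadowing length N is at most n, then a
   is eps-shadowed by a point of X. *)
Lemma markov_approx_shadowed (eps : R) (N n : nat) :
  (N <= n)%N ->
  (forall w : nat -> seq A, (forall j, lang X (w j) /\ (N <= size (w j))%N) ->
    forall x, is_concat w x -> exists2 x', X x' & dbar x x' < eps) ->
  forall a, markov_approx X n a -> exists2 b, X b & dbar a b < eps.
Proof.
move=> Nn shadow a Ma.
pose block j := subword a (j * n.+1) n.+1.
have size_block j : size (block j) = n.+1 by rewrite size_subword.
apply: (shadow block) => j.
  by split; [exact: Ma | rewrite size_block (leq_trans Nn (leqnSn n))].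
rewrite /cumlen (eq_bigr (fun _ => n.+1)) => [|i _]; last exact: size_block.
by rewrite sum_nat_const card_ord size_block.
Qed.

End MarkovApproximation.

Theorem mainTheorem7 (A : finType) (X : set (seqA A)) :
  shift_space X -> dbar_shadowing X -> dbar_approachable X.
Proof.
move=> [[x0 Xx0] _ _] shadowing.
apply/(@cvgrPdist_le _ R^o) => e e0.
have [N [_ shadowN]] := shadowing e e0.
exists N => // n /= Nn.
have /andP[dH0 dHe] : 0 <= dbarH (markov_approx X n) X <= e.
  apply: dbarH_between.
  - by exists x0; apply: sub_markov_approx.
  - move=> a Ma; have [b Xb ab_e] := markov_approx_shadowed Nn shadowN Ma.
    by exists b => //; apply: ltW.
  - move=> b Xb; exists b; first exact: sub_markov_approx.
    by rewrite dbar_xx ltW.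
by rewrite sub0r normrN ger0_norm.
Qed.
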